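(* Let $r\in C(0,1)$ be such that $\inf_{x\in[a,b]}r(x)>0$ for every $[a,b]\subset(0,1)$, and let $\gamma>1$. Then there exists $\delta>0$ such that $B_{r,\gamma,\delta}\ne\varnothing$.
   Context: $A_{r,\gamma}=\{q\in L_{1,loc}(0,1): q\ge0,\ \int_0^1 rq^\gamma\,dx\le1\}$. For a nonnegative $q\in C(0,1)$ with compact support in $(0,1)$, $\lambda_0(q)$ is the smallest eigenvalue of $-y''+qy=\lambda y$, $y(0)=y(1)=0$. $B_{r,\gamma,\delta}$ is the set of $q\in A_{r,\gamma}$ that are continuous on $(0,1)$ with compact support in $(0,1)$ and satisfy $\lambda_0(q)\ge\pi^2+\delta$. *)

From Stdlib Require Import Reals Lra.
From Coquelicot Require Import Coquelicot.
Open Scope R_scope.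

Definition rpow (x g : R) : R := if Req_EM_T x 0 then 0 else Rpower x g.

Definition cont_open01 (f : R -> R) : Prop :=
  forall x, 0 < x < 1 -> continuous f x.

Definition compact_support01 (q : R -> R) : Prop :=
  exists a b, 0 < a /\ a <= b /\ b < 1 /\
    forall x, (x < a \/ b < x) -> q x = 0.

Definition in_A (r : R -> R) (g : R) (q : R -> R) : Prop :=
  (forall x, 0 < x < 1 -> 0 <= q x) /\
  ex_RInt (fun x => r x * rpow (q x) g) 0 1 /\
  RInt (fun x => r x * rpow (q x) g) 0 1 <= 1.

Definition is_eigenvalue (q : R -> R) (l : R) : Prop :=
  exists y dy : R -> R,
    (forall x, 0 <= x <= 1 ->
       filterlim y (within (fun t => 0 <= t <= 1) (locally x)) (locally (y x))) /\
    (forall x, 0 < x < 1 ->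
       is_derive y x (dy x) /\ is_derive dy x (q x * y x - l * y x)) /\
    y 0 = 0 /\ y 1 = 0 /\
    (exists x, 0 < x < 1 /\ y x <> 0).

Definition is_smallest_eigenvalue (q : R -> R) (l : R) : Prop :=
  is_eigenvalue q l /\ forall m, is_eigenvalue q m -> l <= m.

Definition in_B (r : R -> R) (g d : R) (q : R -> R) : Prop :=
  in_A r g q /\ cont_open01 q /\ compact_support01 q /\
  exists l0, is_smallest_eigenvalue q l0 /\ PI ^ 2 + d <= l0.

(* For small [e > 0] let [w = 2 (PI/2 - e + tan e)], so that [w > PI], and let [Y] be
   [sin (w t)] near 0, [sin (w (1 - t))] near 1, and in between the concave parabola with
   vertex at 1/2 that meets both sines to first order where they equal [cos e].  Then
   [Y > 0] on (0,1) and [-Y'' + q Y = w^2 Y] for the continuous potential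
   [q = w^2 (1 - cos e / Y)] on the middle piece, [q = 0] elsewhere; [q] has compact support
   and [q <= 36 e^2], so [int r q^gamma <= 1] once [e] is small compared with a bound of [r]
   on the support.  A positive solution belongs to the lowest eigenvalue: for an eigenpair
   [(m, z)] the Picone quantity [z z' - z^2 Y'/Y] has derivative
   [(z' - z Y'/Y)^2 + (w^2 - m) z^2] and tends to 0 at both ends, which forces [w^2 <= m].
   Hence [lambda_0(q) = w^2 = PI^2 + delta] with [delta > 0]. *)

From Stdlib Require Import Reals Lra Psatz.
From Coquelicot Require Import Coquelicot.
Open Scope R_scope.
Set Bullet Behavior "Strict Subproofs".

Lemma sin_ge_cubic a : 0 <= a <= PI -> a - a ^ 3 / 6 <= sin a.
Proof.
  intros Ha. destruct (SIN a) as [Hlb _]; try lra.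
  unfold sin_lb, sin_approx, sin_term in Hlb; simpl in Hlb.
  pose proof PI_4.
  assert (Hrem : 0 <= a ^ 5 * (42 - a ^ 2) / 5040).
  { apply Rmult_le_pos; [apply Rmult_le_pos; [apply pow_le|]|]; nra. }
  replace (a - a ^ 3 / 6) with
    (a - a ^ 3 / 6 + a ^ 5 / 120 - a ^ 7 / 5040 - a ^ 5 * (42 - a ^ 2) / 5040) by field.
  match type of Hlb with ?X <= _ =>
    replace (a - a ^ 3 / 6 + a ^ 5 / 120 - a ^ 7 / 5040) with X by field end.
  lra.
Qed.

Lemma sin_le_id a : 0 <= a <= PI -> sin a <= a.
Proof.
  intros Ha. destruct (sin_bound a 0) as [_ Hub]; try lra.
  unfold sin_approx, sin_term in Hub; simpl in Hub.
  pose proof PI_4.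
  assert (Hrem : 0 <= a ^ 3 * (20 - a ^ 2) / 120).
  { apply Rmult_le_pos; [apply Rmult_le_pos; [apply pow_le|]|]; nra. }
  match type of Hub with _ <= ?X =>
    replace X with (a - a ^ 3 * (20 - a ^ 2) / 120) in Hub by field end.
  lra.
Qed.

Lemma cos_le_quartic a : 0 <= a <= 1 -> cos a <= 1 - a ^ 2 / 2 + a ^ 4 / 24.
Proof.
  intros Ha. pose proof PI2_3_2. destruct (cos_bound a 0) as [_ Hub]; try lra.
  unfold cos_approx, cos_term in Hub; simpl in Hub.
  match type of Hub with _ <= ?X => replace X with (1 - a ^ 2 / 2 + a ^ 4 / 24) in Hub by field end.
  exact Hub.
Qed.

Lemma cos_ge_quadratic a : 0 <= a <= 1 -> 1 - a ^ 2 / 2 <= cos a.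
Proof.
  intros Ha. pose proof PI2_3_2. destruct (cos_bound a 0) as [Hlb _]; try lra.
  unfold cos_approx, cos_term in Hlb; simpl in Hlb.
  match type of Hlb with ?X <= _ => replace X with (1 - a ^ 2 / 2) in Hlb by field end.
  exact Hlb.
Qed.

Lemma sin_ge_half_id a : 0 <= a <= 1 -> a / 2 <= sin a.
Proof. intros Ha. pose proof PI2_3_2. pose proof (sin_ge_cubic a ltac:(lra)). nra. Qed.

Lemma id_mul_cos_lt_sin a : 0 < a <= 1/2 -> a * cos a < sin a.
Proof.
  intros Ha. pose proof PI2_3_2.
  pose proof (sin_ge_cubic a ltac:(lra)). pose proof (cos_le_quartic a ltac:(lra)).
  assert (0 < a ^ 3 * (8 - a ^ 2) / 24).
  { apply Rmult_lt_0_compat; [apply Rmult_lt_0_compat; [apply pow_lt|]|]; nra. }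
  nra.
Qed.

Lemma derivable_pt_lim_glue (f g h : R -> R) x l d : 0 < d ->
  (forall t, x - d < t <= x -> f t = g t) ->
  (forall t, x <= t < x + d -> f t = h t) ->
  derivable_pt_lim g x l -> derivable_pt_lim h x l -> derivable_pt_lim f x l.
Proof.
  intros Hd Hg Hh Dg Dh eps Heps.
  destruct (Dg eps Heps) as [dg Pg], (Dh eps Heps) as [dh Ph].
  assert (Hm : 0 < Rmin d (Rmin dg dh)).
  { destruct dg, dh; simpl. repeat apply Rmin_pos; auto. }
  exists (mkposreal _ Hm). simpl. intros k Hk Hkd.
  pose proof (Rmin_l d (Rmin dg dh)). pose proof (Rmin_r d (Rmin dg dh)).
  pose proof (Rmin_l dg dh). pose proof (Rmin_r dg dh).
  destruct (Rlt_le_dec k 0) as [Hneg|Hpos].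
  - rewrite Rabs_left in Hkd by lra.
    rewrite (Hg (x + k)), (Hg x) by lra. apply Pg; auto. rewrite Rabs_left; lra.
  - rewrite Rabs_right in Hkd by lra.
    rewrite (Hh (x + k)), (Hh x) by lra. apply Ph; auto. rewrite Rabs_right; lra.
Qed.

Definition splice (c : R) (f g : R -> R) (t : R) : R :=
  if Rle_dec t c then f t else g t.

Lemma splice_left c f g t : t <= c -> splice c f g t = f t.
Proof. intros H. unfold splice. destruct (Rle_dec t c); [auto|lra]. Qed.

Lemma splice_right c f g t : c < t -> splice c f g t = g t.
Proof. intros H. unfold splice. destruct (Rle_dec t c); [lra|auto]. Qed.

Lemma is_derive_splice c (f g df dg : R -> R) :
  (forall x : R, is_derive f x (df x)) -> (forall x : R, is_derive g x (dg x)) ->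
  f c = g c -> df c = dg c ->
  forall x : R, is_derive (splice c f g) x (splice c df dg x).
Proof.
  intros Df Dg Ec Edc x. apply is_derive_Reals.
  assert (Rf : forall y, derivable_pt_lim f y (df y)) by (intro; apply is_derive_Reals; auto).
  assert (Rg : forall y, derivable_pt_lim g y (dg y)) by (intro; apply is_derive_Reals; auto).
  destruct (Rtotal_order x c) as [Hx|[Hx|Hx]].
  - rewrite splice_left by lra.
    apply (derivable_pt_lim_glue _ f f x _ (c - x)); auto; try lra;
      intros t Ht; apply splice_left; lra.
  - subst x. rewrite splice_left by lra.
    apply (derivable_pt_lim_glue _ f g c _ 1); auto; try lra.
    + intros t Ht. apply splice_left; lra.
    + intros t Ht. destruct (Req_dec t c) as [->|Htc].
      * rewrite splice_left; lra.
      * apply splice_right; lra.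
    + rewrite Edc; auto.
  - rewrite splice_right by lra.
    apply (derivable_pt_lim_glue _ g g x _ (x - c)); auto; try lra;
      intros t Ht; apply splice_right; lra.
Qed.

Lemma continuous_Rmax_comp (f g : R -> R) x :
  continuous f x -> continuous g x -> continuous (fun t => Rmax (f t) (g t)) x.
Proof.
  intros Hf Hg.
  apply (continuous_ext (fun t => (f t + g t + Rabs (f t - g t)) * / 2)).
  - intro t. cbv beta. unfold Rmax. destruct (Rle_dec (f t) (g t)).
    + rewrite Rabs_left1 by lra. lra.
    + rewrite Rabs_right by lra. lra.
  - apply (continuous_mult (fun t => f t + g t + Rabs (f t - g t)) (fun _ => / 2));
      [|apply continuous_const].
    apply (continuous_plus (fun t => f t + g t) (fun t => Rabs (f t - g t))).
    + apply (continuous_plus f g); auto.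
    + apply continuous_Rabs_comp. apply (continuous_plus f (fun t => - g t)); auto.
      apply (continuous_opp g); auto.
Qed.

Lemma abs_sub_le_of_derive_bound (f df : R -> R) a b K : a <= b ->
  (forall x, a <= x <= b -> is_derive f x (df x)) ->
  (forall x, a <= x <= b -> Rabs (df x) <= K) ->
  Rabs (f b - f a) <= K * (b - a).
Proof.
  intros Hab Hd HK. destruct (Req_dec a b) as [->|Hne].
  { rewrite !Rminus_diag, Rabs_R0. lra. }
  destruct (MVT_gen f a b df) as [xi [Hxi Heq]].
  - intros x Hx. rewrite Rmin_left, Rmax_right in Hx by lra. apply Hd; lra.
  - intros x Hx. rewrite Rmin_left, Rmax_right in Hx by lra.
    apply continuity_pt_filterlim, (ex_derive_continuous f). eexists. apply Hd; lra.
  - rewrite Rmin_left, Rmax_right in Hxi by lra.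
    rewrite Heq, Rabs_mult, (Rabs_right (b - a)) by lra.
    apply Rmult_le_compat_r; [lra|]. apply HK; lra.
Qed.

Lemma is_derive_reflect (f : R -> R) x l :
  is_derive f (1 - x) l -> is_derive (fun t => f (1 - t)) x (- l).
Proof.
  intros Hf. replace (- l) with (scal (-1) l) by (unfold scal; simpl; unfold mult; simpl; ring).
  apply (is_derive_comp f (fun t => 1 - t)); auto.
  auto_derive; auto.
Qed.

Lemma is_RInt_zero_inside (F : R -> R) a b : a <= b ->
  (forall x, a < x < b -> F x = 0) -> is_RInt F a b 0.
Proof.
  intros Hab HF. apply (is_RInt_ext (fun _ => 0)).
  - intros x Hx. rewrite Rmin_left, Rmax_right in Hx by lra. symmetry. auto.
  - pose proof (is_RInt_const a b (0 : R)) as H0.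
    unfold scal in H0; simpl in H0; unfold mult in H0; simpl in H0.
    rewrite Rmult_0_r in H0. exact H0.
Qed.

Lemma rpow_0 g : rpow 0 g = 0.
Proof. unfold rpow. destruct (Req_EM_T 0 0); [auto|congruence]. Qed.

Lemma rpow_le_self v g : 1 <= g -> 0 <= v <= 1 -> 0 <= rpow v g <= v.
Proof.
  intros Hg Hv. unfold rpow, Rpower. destruct (Req_EM_T v 0) as [E|E]; [lra|].
  split; [left; apply exp_pos|].
  assert (ln v <= 0) by (rewrite <- ln_1; apply ln_le; lra).
  assert (Hexp : g * ln v <= ln v) by nra.
  rewrite <- (exp_ln v) at 2 by lra.
  destruct (Rle_lt_or_eq_dec _ _ Hexp) as [Hlt|Heq]; [left; apply exp_increasing; auto | rewrite Heq; lra].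
Qed.

Lemma continuous_rpow_comp (f : R -> R) g t : 1 <= g -> (forall u, 0 <= f u) ->
  continuous f t -> continuous (fun u => rpow (f u) g) t.
Proof.
  intros Hg Hf Hc. destruct (Hf t) as [Hpos|Hzero].
  - apply (continuous_comp f (fun y => rpow y g)); auto.
    apply (continuous_ext_loc _ (fun y => exp (g * ln y))).
    + exists (mkposreal _ Hpos). intros y Hy. simpl in Hy.
      change (Rabs (y - f t) < f t) in Hy. apply Rabs_lt_between in Hy.
      unfold rpow. destruct (Req_EM_T y 0); [lra|reflexivity].
    + apply (ex_derive_continuous (V := R_NormedModule) (fun y => exp (g * ln y))).
      auto_derive. auto.
  - apply (proj2 (filterlim_locally _ _)). intros eps.
    assert (He : 0 < Rmin eps 1) by (apply Rmin_pos; [apply cond_pos|lra]).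
    pose proof (Rmin_l eps 1). pose proof (Rmin_r eps 1).
    eapply filter_imp; [|exact (proj1 (filterlim_locally _ _) Hc (mkposreal _ He))].
    simpl. intros u Hu.
    change (Rabs (f u - f t) < Rmin eps 1) in Hu.
    change (Rabs (rpow (f u) g - rpow (f t) g) < eps).
    rewrite <- Hzero, rpow_0, Rminus_0_r in *. pose proof (Hf u).
    rewrite Rabs_right in Hu by lra. pose proof (rpow_le_self (f u) g Hg ltac:(lra)).
    rewrite Rabs_right; lra.
Qed.

Section Picone.

Variables (q Y dY z dz : R -> R) (lam m : R).
Hypothesis Y_pos : forall t, 0 < t < 1 -> 0 < Y t.
Hypothesis Y_solves : forall t, 0 < t < 1 ->
  is_derive Y t (dY t) /\ is_derive dY t (q t * Y t - lam * Y t).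
Hypothesis z_solves : forall t, 0 < t < 1 ->
  is_derive z t (dz t) /\ is_derive dz t (q t * z t - m * z t).

Definition picone (t : R) : R := z t * dz t - z t ^ 2 * (dY t / Y t).

Lemma is_derive_picone t : 0 < t < 1 ->
  is_derive picone t ((dz t - z t * (dY t / Y t)) ^ 2 + (lam - m) * z t ^ 2).
Proof.
  intros Ht. destruct (z_solves t Ht) as [Dz Ddz], (Y_solves t Ht) as [DY DdY].
  apply is_derive_Reals in Dz, Ddz, DY, DdY.
  pose proof (Y_pos t Ht) as HY.
  assert (G := derivable_pt_lim_minus _ _ _ _ _ (derivable_pt_lim_mult _ _ _ _ _ Dz Ddz)
    (derivable_pt_lim_mult _ _ _ _ _ (derivable_pt_lim_mult _ _ _ _ _ Dz Dz)
      (derivable_pt_lim_div _ _ _ _ _ DdY DY (Rgt_not_eq _ _ HY)))).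
  apply (is_derive_ext (z * dz - (z * z) * (dY / Y))%F).
  { intro u. change (z u * dz u - z u * z u * (dY u / Y u) = picone u). unfold picone. ring. }
  apply is_derive_Reals.
  match type of G with derivable_pt_lim _ _ ?L => replace (_ ^ 2 + _) with L end; [exact G|].
  unfold div_fct, mult_fct, Rsqr. field. lra.
Qed.

Lemma picone_nondecreasing s t : m <= lam -> 0 < s <= t -> t < 1 -> picone s <= picone t.
Proof.
  intros Hm Hs Ht. destruct (Req_dec s t) as [->|Hst]; [lra|].
  destruct (MVT_gen picone s t (fun u =>
    (dz u - z u * (dY u / Y u)) ^ 2 + (lam - m) * z u ^ 2)) as [xi [_ Heq]].
  - intros x Hx. rewrite Rmin_left, Rmax_right in Hx by lra. apply is_derive_picone; lra.
  - intros x Hx. rewrite Rmin_left, Rmax_right in Hx by lra.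
    apply continuity_pt_filterlim, (ex_derive_continuous picone).
    eexists. apply is_derive_picone; lra.
  - assert (Hder : 0 <= (dz xi - z xi * (dY xi / Y xi)) ^ 2 + (lam - m) * z xi ^ 2).
    { pose proof (pow2_ge_0 (dz xi - z xi * (dY xi / Y xi))).
      pose proof (Rmult_le_pos (lam - m) _ ltac:(lra) (pow2_ge_0 (z xi))). lra. }
    pose proof (Rmult_le_pos _ (t - s) Hder ltac:(lra)). lra.
Qed.

Lemma picone_eq_0 :
  m <= lam ->
  (forall eps, 0 < eps -> exists d, 0 < d /\ forall t, 0 < t < d -> Rabs (picone t) <= eps) ->
  (forall eps, 0 < eps -> exists d, 0 < d /\ forall t, 1 - d < t < 1 -> Rabs (picone t) <= eps) ->
  forall t, 0 < t < 1 -> picone t = 0.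
Proof.
  intros Hm Van0 Van1 t Ht. apply Rle_antisym.
  - apply Rnot_lt_le. intro Hp.
    destruct (Van1 (picone t / 2) ltac:(lra)) as [d [Hd Hdd]].
    set (s := 1 - Rmin d (1 - t) / 2).
    assert (0 < Rmin d (1 - t)) by (apply Rmin_pos; lra).
    pose proof (Rmin_l d (1 - t)). pose proof (Rmin_r d (1 - t)).
    specialize (Hdd s ltac:(unfold s; lra)). apply Rabs_le_between in Hdd.
    pose proof (picone_nondecreasing t s Hm ltac:(unfold s; lra) ltac:(unfold s; lra)). lra.
  - apply Rnot_lt_le. intro Hp.
    destruct (Van0 (- picone t / 2) ltac:(lra)) as [d [Hd Hdd]].
    set (s := Rmin d t / 2).
    assert (0 < Rmin d t) by (apply Rmin_pos; lra).
    pose proof (Rmin_l d t). pose proof (Rmin_r d t).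
    specialize (Hdd s ltac:(unfold s; lra)). apply Rabs_le_between in Hdd.
    pose proof (picone_nondecreasing s t Hm ltac:(unfold s; lra) ltac:(lra)). lra.
Qed.

(* If [m < lam], [picone] vanishes identically while its derivative is positive where [z <> 0]. *)
Lemma le_eigenvalue_of_picone :
  (forall eps, 0 < eps -> exists d, 0 < d /\ forall t, 0 < t < d -> Rabs (picone t) <= eps) ->
  (forall eps, 0 < eps -> exists d, 0 < d /\ forall t, 1 - d < t < 1 -> Rabs (picone t) <= eps) ->
  (exists x, 0 < x < 1 /\ z x <> 0) ->
  lam <= m.
Proof.
  intros Van0 Van1 [x0 [Hx0 Hzx0]]. apply Rnot_lt_le. intro Hlt.
  assert (Hr : 0 < Rmin x0 (1 - x0)) by (apply Rmin_pos; lra).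
  assert (Hflat : is_derive picone x0 0).
  { apply (is_derive_ext_loc (fun _ => 0)); [|auto_derive; auto].
    exists (mkposreal _ Hr). intros y Hy. simpl in Hy.
    change (Rabs (y - x0) < Rmin x0 (1 - x0)) in Hy. apply Rabs_lt_between in Hy.
    pose proof (Rmin_l x0 (1 - x0)). pose proof (Rmin_r x0 (1 - x0)).
    symmetry. apply picone_eq_0; auto; lra. }
  pose proof (is_derive_unique _ _ _ Hflat) as U0.
  rewrite (is_derive_unique _ _ _ (is_derive_picone x0 Hx0)) in U0.
  assert (0 < (lam - m) * z x0 ^ 2).
  { apply Rmult_lt_0_compat; [lra|]. rewrite <- Rsqr_pow2. apply Rsqr_pos_lt; auto. }
  pose proof (pow2_ge_0 (dz x0 - z x0 * (dY x0 / Y x0))). lra.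
Qed.

End Picone.

Lemma solution_bounds_near_0 (z dz : R -> R) (m c : R) : 0 < c ->
  (forall eps, 0 < eps -> exists d, 0 < d /\ forall t, 0 < t < d -> Rabs (z t) < eps) ->
  (forall x, 0 < x < c -> is_derive z x (dz x) /\ is_derive dz x (- m * z x)) ->
  exists a K, 0 < a /\ forall t, 0 < t < a -> Rabs (dz t) <= K /\ Rabs (z t) <= K * t.
Proof.
  intros Hc Hz Hd.
  destruct (Hz 1 Rlt_0_1) as [d1 [Hd1 Hz1]].
  set (a := Rmin (Rmin d1 c) 1).
  assert (Ha : 0 < a) by (repeat apply Rmin_pos; lra).
  assert (Ha1 : a <= Rmin d1 c) by apply Rmin_l. assert (Ha2 : a <= 1) by apply Rmin_r.
  pose proof (Rmin_l d1 c). pose proof (Rmin_r d1 c).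
  set (p := a / 2). set (K := Rabs (dz p) + Rabs m).
  assert (HddzK : forall x, 0 < x < a -> Rabs (- m * z x) <= Rabs m).
  { intros x Hx. rewrite Rabs_mult, Rabs_Ropp. pose proof (Rabs_pos m).
    pose proof (Hz1 x ltac:(lra)). pose proof (Rabs_pos (z x)). nra. }
  assert (HdzK : forall t, 0 < t < a -> Rabs (dz t) <= K).
  { intros t Ht.
    assert (Rabs (dz t - dz p) <= Rabs m).
    { destruct (Rle_dec p t).
      - pose proof (abs_sub_le_of_derive_bound dz (fun x => - m * z x) p t (Rabs m)
          ltac:(lra) ltac:(intros; apply Hd; unfold p in *; lra)
          ltac:(intros; apply HddzK; unfold p in *; lra)).
        pose proof (Rabs_pos m). unfold p in *. nra.
      - rewrite Rabs_minus_sym.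
        pose proof (abs_sub_le_of_derive_bound dz (fun x => - m * z x) t p (Rabs m)
          ltac:(lra) ltac:(intros; apply Hd; unfold p in *; lra)
          ltac:(intros; apply HddzK; unfold p in *; lra)).
        pose proof (Rabs_pos m). unfold p in *. nra. }
    pose proof (Rabs_triang_inv (dz t) (dz p)). unfold K. lra. }
  exists a, K. split; [exact Ha|]. intros t Ht. split; [auto|].
  apply Rle_plus_epsilon. intros eps Heps.
  destruct (Hz eps Heps) as [d2 [Hd2 Hz2]].
  set (s := Rmin d2 t / 2).
  assert (0 < Rmin d2 t) by (apply Rmin_pos; lra).
  pose proof (Rmin_l d2 t). pose proof (Rmin_r d2 t).
  pose proof (Hz2 s ltac:(unfold s; lra)).
  pose proof (abs_sub_le_of_derive_bound z dz s t K ltac:(unfold s; lra)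
    ltac:(intros; apply Hd; unfold s in *; lra)
    ltac:(intros; apply HdzK; unfold s in *; lra)).
  pose proof (Rabs_triang_inv (z t) (z s)).
  assert (0 <= K) by (pose proof (HdzK t Ht); pose proof (Rabs_pos (dz t)); lra).
  assert (K * (t - s) <= K * t) by (apply Rmult_le_compat_l; unfold s in *; lra).
  lra.
Qed.

Lemma abs_sq_mul_cot_le (y w t K : R) : 0 < w -> 0 < t -> w * t <= 1 -> Rabs y <= K * t ->
  Rabs (y ^ 2 * (w * cos (w * t) / sin (w * t))) <= 2 * K ^ 2 * t.
Proof.
  intros Hw Ht Hwt Hy.
  assert (HS : w * t / 2 <= sin (w * t)) by (apply sin_ge_half_id; split; nra).
  assert (HC : Rabs (cos (w * t)) <= 1) by (apply Rabs_le; apply COS_bound).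
  assert (Hy2 : Rabs y ^ 2 <= (K * t) ^ 2) by (apply pow_incr; split; [apply Rabs_pos | auto]).
  set (X := y ^ 2 * (w * cos (w * t) / sin (w * t))).
  assert (E : Rabs X * sin (w * t) = Rabs y ^ 2 * w * Rabs (cos (w * t))).
  { unfold X. rewrite <- (Rabs_right (sin (w * t))) at 2 by nra. rewrite <- Rabs_mult.
    replace (y ^ 2 * (w * cos (w * t) / sin (w * t)) * sin (w * t))
      with (y ^ 2 * w * cos (w * t)) by (field; nra).
    rewrite !Rabs_mult, (Rabs_right w), <- RPow_abs by lra. ring. }
  assert (Rabs y ^ 2 * w * Rabs (cos (w * t)) <= (K * t) ^ 2 * w).
  { apply Rle_trans with (Rabs y ^ 2 * w); [|apply Rmult_le_compat_r; lra].
    rewrite <- (Rmult_1_r (Rabs y ^ 2 * w)) at 2. apply Rmult_le_compat_l; [|lra].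
    pose proof (pow2_ge_0 (Rabs y)). nra. }
  pose proof (Rabs_pos X).
  assert (Rabs X * (w * t / 2) <= (K * t) ^ 2 * w) by nra.
  apply Rmult_le_reg_r with (w * t / 2); nra.
Qed.

Lemma sine_picone_term_vanishes_at_0 (z dz : R -> R) (w a K : R) : 0 < w -> 0 < a ->
  (forall t, 0 < t < a -> Rabs (dz t) <= K /\ Rabs (z t) <= K * t) ->
  forall eps, 0 < eps -> exists d, 0 < d /\ forall t, 0 < t < d ->
    Rabs (z t * dz t - z t ^ 2 * (w * cos (w * t) / sin (w * t))) <= eps.
Proof.
  intros Hw Ha HK eps Heps.
  assert (HK0 : 0 <= K).
  { destruct (HK (a / 2) ltac:(lra)) as [Hdz _]. pose proof (Rabs_pos (dz (a / 2))). lra. }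
  set (d := Rmin a (Rmin (1 / w) (eps / (3 * K ^ 2 + 1)))).
  assert (Hd : 0 < d).
  { repeat apply Rmin_pos; [lra| |]; apply Rdiv_lt_0_compat; try lra. nra. }
  exists d. split; [exact Hd|]. intros t Ht.
  assert (Hda : d <= a) by apply Rmin_l.
  assert (Hdw : d <= 1 / w) by (eapply Rle_trans; [apply Rmin_r | apply Rmin_l]).
  assert (Hde : d <= eps / (3 * K ^ 2 + 1)) by (eapply Rle_trans; [apply Rmin_r | apply Rmin_r]).
  destruct (HK t ltac:(lra)) as [Hdz Hz].
  assert (Hwt : w * t <= 1).
  { apply Rle_trans with (w * (1 / w)); [apply Rmult_le_compat_l; lra | right; field; lra]. }
  set (X := z t ^ 2 * (w * cos (w * t) / sin (w * t))).
  assert (HX : Rabs X <= 2 * K ^ 2 * t) by (apply abs_sq_mul_cot_le; lra).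
  assert (HP : Rabs (z t * dz t) <= K ^ 2 * t).
  { rewrite Rabs_mult. pose proof (Rabs_pos (z t)). pose proof (Rabs_pos (dz t)).
    apply Rle_trans with (K * t * K); [apply Rmult_le_compat; lra | nra]. }
  assert (3 * K ^ 2 * t <= eps).
  { assert (t * (3 * K ^ 2 + 1) <= eps).
    { apply Rle_trans with (eps / (3 * K ^ 2 + 1) * (3 * K ^ 2 + 1));
        [apply Rmult_le_compat_r; nra | right; field; nra]. }
    nra. }
  apply Rle_trans with (Rabs (z t * dz t) + Rabs X); [|lra].
  unfold Rminus. rewrite <- (Rabs_Ropp X). apply Rabs_triang.
Qed.

Lemma sine_picone_vanishes_at_0 (z dz : R -> R) (m w c : R) : 0 < c -> 0 < w ->
  (forall eps, 0 < eps -> exists d, 0 < d /\ forall t, 0 < t < d -> Rabs (z t) < eps) ->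
  (forall x, 0 < x < c -> is_derive z x (dz x) /\ is_derive dz x (- m * z x)) ->
  forall eps, 0 < eps -> exists d, 0 < d /\ forall t, 0 < t < d ->
    Rabs (z t * dz t - z t ^ 2 * (w * cos (w * t) / sin (w * t))) <= eps.
Proof.
  intros Hc Hw Hz Hd.
  destruct (solution_bounds_near_0 z dz m c Hc Hz Hd) as [a [K [Ha HK]]].
  exact (sine_picone_term_vanishes_at_0 z dz w a K Hw Ha HK).
Qed.

Section GroundState.

Variable e : R.
Hypothesis He : 0 < e <= 1/2.

Definition freq : R := 2 * (PI / 2 - e + sin e / cos e).
Definition junction : R := (PI / 2 - e) / freq.
Definition cap (t : R) : R :=
  cos e + sin e ^ 2 / (2 * cos e) - freq ^ 2 * cos e / 2 * (t - 1/2) ^ 2.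

Lemma cos_sin_small : 7/8 <= cos e <= 1 /\ 0 < sin e <= e.
Proof.
  pose proof PI2_3_2. pose proof (cos_ge_quadratic e ltac:(lra)).
  pose proof (COS_bound e). pose proof (sin_le_id e ltac:(lra)).
  pose proof (sin_gt_0 e ltac:(lra) ltac:(lra)). nra.
Qed.

Lemma tan_small : e < sin e / cos e <= 4/7.
Proof.
  destruct cos_sin_small. pose proof (id_mul_cos_lt_sin e He).
  split; [apply Rmult_lt_reg_r with (cos e) | apply Rmult_le_reg_r with (cos e)];
    try lra; field_simplify; lra.
Qed.

Lemma PI_lt_freq : PI < freq.
Proof. pose proof tan_small. unfold freq. lra. Qed.

Lemma freq_le_6 : freq <= 6.
Proof. pose proof tan_small. pose proof PI_4. unfold freq. lra. Qed.

Lemma freq_mul_junction : freq * junction = PI / 2 - e.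
Proof. pose proof PI_lt_freq. pose proof PI_RGT_0. unfold junction. field. lra. Qed.

Lemma half_sub_junction : 1/2 - junction = sin e / (cos e * freq).
Proof.
  pose proof PI_lt_freq. pose proof PI_RGT_0. destruct cos_sin_small.
  unfold junction. replace (PI / 2 - e) with (freq / 2 - sin e / cos e) by (unfold freq; field; lra).
  field. split; lra.
Qed.

Lemma junction_bounds : 1/4 <= junction < 1/2.
Proof.
  pose proof PI_lt_freq. pose proof PI_RGT_0. pose proof PI2_3_2.
  pose proof tan_small. destruct cos_sin_small. pose proof freq_mul_junction.
  assert (0 < sin e / (cos e * freq)) by (apply Rdiv_lt_0_compat; nra).
  pose proof half_sub_junction.
  assert (freq <= 4 * (PI / 2 - e)) by (unfold freq; lra).
  split; nra.
Qed.

Lemma sin_cos_freq_junction : sin (freq * junction) = cos e /\ cos (freq * junction) = sin e.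
Proof. rewrite freq_mul_junction, sin_shift, cos_shift. auto. Qed.

Lemma cap_sub_cos t :
  cap t - cos e = freq ^ 2 * cos e / 2 * ((1/2 - junction) ^ 2 - (t - 1/2) ^ 2).
Proof.
  pose proof PI_lt_freq. pose proof PI_RGT_0. destruct cos_sin_small.
  rewrite half_sub_junction. unfold cap. field. split; lra.
Qed.

Lemma curvature_pos : 0 < freq ^ 2 * cos e / 2.
Proof. pose proof PI_lt_freq. pose proof PI_RGT_0. destruct cos_sin_small. nra. Qed.

Lemma cap_le_cos t : t <= junction \/ 1 - junction <= t -> cap t <= cos e.
Proof.
  intros Ht. pose proof (cap_sub_cos t). pose proof curvature_pos. pose proof junction_bounds.
  assert ((1/2 - junction) ^ 2 <= (t - 1/2) ^ 2) by (destruct Ht; nra).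
  nra.
Qed.

Lemma cos_le_cap t : junction <= t <= 1 - junction -> cos e <= cap t.
Proof.
  intros Ht. pose proof (cap_sub_cos t). pose proof curvature_pos. pose proof junction_bounds.
  assert ((t - 1/2) ^ 2 <= (1/2 - junction) ^ 2) by nra.
  nra.
Qed.

Lemma cap_le_top t : cap t <= cos e + sin e ^ 2 / (2 * cos e).
Proof. pose proof curvature_pos. pose proof (pow2_ge_0 (t - 1/2)). unfold cap. nra. Qed.

Definition ground_state : R -> R :=
  splice junction (fun t => sin (freq * t))
    (splice (1 - junction) cap (fun t => sin (freq * (1 - t)))).

Definition ground_state' : R -> R :=
  splice junction (fun t => freq * cos (freq * t))
    (splice (1 - junction) (fun t => - (freq ^ 2 * cos e) * (t - 1/2))
       (fun t => - (freq * cos (freq * (1 - t))))).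

Definition ground_state'' : R -> R :=
  splice junction (fun t => - (freq ^ 2 * sin (freq * t)))
    (splice (1 - junction) (fun _ => - (freq ^ 2 * cos e))
       (fun t => - (freq ^ 2 * sin (freq * (1 - t))))).

Definition potential (t : R) : R := freq ^ 2 * (1 - cos e / Rmax (cos e) (cap t)).

Lemma cap_at_junctions : cap junction = cos e /\ cap (1 - junction) = cos e.
Proof.
  pose proof (cap_sub_cos junction). pose proof (cap_sub_cos (1 - junction)).
  split; nra.
Qed.

Lemma slope_at_junction : freq * sin e = freq ^ 2 * cos e * (1/2 - junction).
Proof.
  pose proof PI_lt_freq. pose proof PI_RGT_0. destruct cos_sin_small.
  rewrite half_sub_junction. field. split; lra.
Qed.

Lemma is_derive_ground_state x : is_derive ground_state x (ground_state' x).
Proof.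
  pose proof junction_bounds. destruct sin_cos_freq_junction as [Hs Hc].
  destruct cap_at_junctions as [Cl Cr]. pose proof slope_at_junction.
  revert x. apply is_derive_splice.
  - intro t. auto_derive; auto. ring.
  - apply is_derive_splice.
    + intro t. unfold cap. auto_derive; auto. field.
    + intro t. auto_derive; auto. unfold Rminus. ring.
    + rewrite Cr. replace (1 - (1 - junction)) with junction by ring. auto.
    + replace (1 - (1 - junction)) with junction by ring. rewrite Hc. nra.
  - rewrite splice_left by lra. rewrite Hs, Cl. auto.
  - rewrite splice_left by lra. rewrite Hc. nra.
Qed.

Lemma is_derive_ground_state' x : is_derive ground_state' x (ground_state'' x).
Proof.
  pose proof junction_bounds. destruct sin_cos_freq_junction as [Hs Hc].
  pose proof slope_at_junction.
  revert x. apply is_derive_splice.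
  - intro t. auto_derive; auto. ring.
  - apply is_derive_splice.
    + intro t. auto_derive; auto. ring.
    + intro t. auto_derive; auto. unfold Rminus. ring.
    + replace (1 - (1 - junction)) with junction by ring. rewrite Hc. nra.
    + replace (1 - (1 - junction)) with junction by ring. rewrite Hs. auto.
  - rewrite splice_left by lra. rewrite Hc. nra.
  - rewrite splice_left by lra. rewrite Hs. auto.
Qed.

Lemma ground_state_left t : t <= junction ->
  ground_state t = sin (freq * t) /\ ground_state' t = freq * cos (freq * t).
Proof. intros Ht. unfold ground_state, ground_state'. rewrite !splice_left by lra. auto. Qed.

Lemma ground_state_right t : 1 - junction < t ->
  ground_state t = sin (freq * (1 - t)) /\
  ground_state' t = - (freq * cos (freq * (1 - t))).
Proof.
  intros Ht. pose proof junction_bounds. unfold ground_state, ground_state'.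
  rewrite !splice_right by lra. auto.
Qed.

Lemma potential_outside t : t <= junction \/ 1 - junction <= t -> potential t = 0.
Proof.
  intros Ht. destruct cos_sin_small. unfold potential.
  rewrite Rmax_left by (apply cap_le_cos; auto). field. lra.
Qed.

Lemma potential_inside t : junction <= t <= 1 - junction ->
  potential t = freq ^ 2 * (1 - cos e / cap t).
Proof. intros Ht. unfold potential. rewrite Rmax_right by (apply cos_le_cap; auto). auto. Qed.

Lemma ground_state_ode x :
  ground_state'' x = potential x * ground_state x - freq ^ 2 * ground_state x.
Proof.
  pose proof junction_bounds. destruct cos_sin_small.
  unfold ground_state'', ground_state.
  destruct (Rle_dec x junction) as [Hl|Hl].
  - rewrite !splice_left, potential_outside by lra. ring.
  - rewrite !(splice_right junction) by lra.
    destruct (Rle_dec x (1 - junction)) as [Hm|Hm].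
    + rewrite !splice_left, potential_inside by lra.
      pose proof (cos_le_cap x ltac:(lra)). field. lra.
    + rewrite !splice_right, potential_outside by lra. ring.
Qed.

Lemma ground_state_pos x : 0 < x < 1 -> 0 < ground_state x.
Proof.
  intros Hx. pose proof junction_bounds. destruct cos_sin_small.
  pose proof freq_mul_junction. pose proof PI_lt_freq. pose proof PI_RGT_0.
  unfold ground_state.
  destruct (Rle_dec x junction) as [Hl|Hl].
  - rewrite splice_left by lra. apply sin_gt_0; nra.
  - rewrite splice_right by lra.
    destruct (Rle_dec x (1 - junction)) as [Hm|Hm].
    + rewrite splice_left by lra. pose proof (cos_le_cap x ltac:(lra)). lra.
    + rewrite splice_right by lra. apply sin_gt_0; nra.
Qed.

Lemma potential_nonneg t : 0 <= potential t.
Proof.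
  destruct cos_sin_small. pose proof PI_lt_freq. pose proof PI_RGT_0. unfold potential.
  pose proof (Rmax_l (cos e) (cap t)).
  assert (cos e / Rmax (cos e) (cap t) <= 1).
  { apply Rmult_le_reg_r with (Rmax (cos e) (cap t)); [lra|]. field_simplify; lra. }
  apply Rmult_le_pos; nra.
Qed.

(* [1 - cos e / Rmax (cos e) cap <= tan e ^ 2 / 2 <= e ^ 2] and [freq <= 6]. *)
Lemma potential_le t : potential t <= 36 * e ^ 2.
Proof.
  destruct cos_sin_small as [Hc Hs]. pose proof freq_le_6. pose proof PI_lt_freq.
  pose proof PI_RGT_0. pose proof (cap_le_top t).
  set (p := Rmax (cos e) (cap t)).
  assert (Hp : cos e <= p /\ p <= cos e + sin e ^ 2 / (2 * cos e)).
  { split; [apply Rmax_l | apply Rmax_lub; auto]. assert (0 < sin e ^ 2 / (2 * cos e)).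
    { apply Rdiv_lt_0_compat; nra. } lra. }
  assert (Htan : sin e ^ 2 / (2 * cos e) <= e ^ 2 * cos e).
  { apply Rmult_le_reg_r with (2 * cos e); [lra|].
    replace (sin e ^ 2 / (2 * cos e) * (2 * cos e)) with (sin e ^ 2)
      by (field; apply Rgt_not_eq; lra).
    assert (sin e ^ 2 <= e ^ 2) by (apply pow_incr; lra).
    assert (1 <= 2 * cos e * cos e) by nra. pose proof (pow2_ge_0 e). nra. }
  assert (Hratio : 1 - cos e / p <= e ^ 2).
  { replace (1 - cos e / p) with ((p - cos e) / p) by (field; lra).
    apply Rmult_le_reg_r with p; [lra|].
    replace ((p - cos e) / p * p) with (p - cos e) by (field; lra). nra. }
  unfold potential. fold p. pose proof (Rmax_l (cos e) (cap t)).
  assert (0 <= 1 - cos e / p).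
  { apply Rmult_le_reg_r with p; [lra|]. field_simplify; lra. }
  assert (freq ^ 2 <= 36) by nra. nra.
Qed.

Lemma continuous_potential t : continuous potential t.
Proof.
  destruct cos_sin_small. unfold potential.
  assert (Hcap : continuous cap t).
  { apply (ex_derive_continuous (V := R_NormedModule) cap). unfold cap. auto_derive. auto. }
  assert (Hmax : continuous (fun u => Rmax (cos e) (cap u)) t).
  { apply (continuous_Rmax_comp (fun _ => cos e) cap); auto. apply continuous_const. }
  assert (Hpos : 0 < Rmax (cos e) (cap t)) by (pose proof (Rmax_l (cos e) (cap t)); lra).
  apply (continuous_mult (fun _ => freq ^ 2)); [apply continuous_const|].
  apply (continuous_minus (fun _ => 1)); [apply continuous_const|].
  apply (continuous_mult (fun _ => cos e)); [apply continuous_const|].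
  apply continuous_Rinv_comp; auto. lra.
Qed.

End GroundState.

Lemma small_near_0_of_continuous_within (z : R -> R) :
  filterlim z (within (fun t => 0 <= t <= 1) (locally 0)) (locally (z 0)) -> z 0 = 0 ->
  forall eps, 0 < eps -> exists d, 0 < d /\ forall t, 0 < t < d -> Rabs (z t) < eps.
Proof.
  intros Hz z0 eps Heps.
  destruct (proj1 (filterlim_locally _ _) Hz (mkposreal eps Heps)) as [d Hd].
  exists (Rmin d 1). split; [apply Rmin_pos; [apply cond_pos | lra]|]. intros t Ht.
  pose proof (Rmin_l d 1). pose proof (Rmin_r d 1).
  assert (Hb : ball 0 d t) by (change (Rabs (t - 0) < d); rewrite Rminus_0_r, Rabs_right; lra).
  pose proof (Hd t Hb ltac:(lra)) as Hzt. change (Rabs (z t - z 0) < eps) in Hzt.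
  rewrite z0, Rminus_0_r in Hzt. exact Hzt.
Qed.

Lemma small_near_1_of_continuous_within (z : R -> R) :
  filterlim z (within (fun t => 0 <= t <= 1) (locally 1)) (locally (z 1)) -> z 1 = 0 ->
  forall eps, 0 < eps -> exists d, 0 < d /\ forall t, 0 < t < d -> Rabs (z (1 - t)) < eps.
Proof.
  intros Hz z1 eps Heps.
  destruct (proj1 (filterlim_locally _ _) Hz (mkposreal eps Heps)) as [d Hd].
  exists (Rmin d 1). split; [apply Rmin_pos; [apply cond_pos | lra]|]. intros t Ht.
  pose proof (Rmin_l d 1). pose proof (Rmin_r d 1).
  assert (Hb : ball 1 d (1 - t)).
  { change (Rabs (1 - t - 1) < d). replace (1 - t - 1) with (- t) by ring.
    rewrite Rabs_Ropp, Rabs_right; lra. }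
  pose proof (Hd (1 - t) Hb ltac:(lra)) as Hzt. change (Rabs (z (1 - t) - z 1) < eps) in Hzt.
  rewrite z1, Rminus_0_r in Hzt. exact Hzt.
Qed.

Lemma ground_state_picone_vanishes_at_0 e (z dz : R -> R) m : 0 < e <= 1/2 ->
  (forall eps, 0 < eps -> exists d, 0 < d /\ forall t, 0 < t < d -> Rabs (z t) < eps) ->
  (forall x, 0 < x < junction e -> is_derive z x (dz x) /\ is_derive dz x (- m * z x)) ->
  forall eps, 0 < eps -> exists d, 0 < d /\ forall t, 0 < t < d ->
    Rabs (picone (ground_state e) (ground_state' e) z dz t) <= eps.
Proof.
  intros He Hz Hd eps Heps.
  pose proof (junction_bounds e He). pose proof (PI_lt_freq e He). pose proof PI_RGT_0.
  destruct (sine_picone_vanishes_at_0 z dz m (freq e) (junction e)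
    ltac:(lra) ltac:(lra) Hz Hd eps Heps) as [d [Hd0 Hdd]].
  exists (Rmin d (junction e)). split; [apply Rmin_pos; lra|]. intros t Ht.
  pose proof (Rmin_l d (junction e)). pose proof (Rmin_r d (junction e)).
  destruct (ground_state_left e t ltac:(lra)) as [E1 E2].
  unfold picone. rewrite E1, E2. apply Hdd. lra.
Qed.

Lemma ground_state_picone_vanishes_at_1 e (z dz : R -> R) m : 0 < e <= 1/2 ->
  (forall eps, 0 < eps -> exists d, 0 < d /\ forall t, 0 < t < d -> Rabs (z (1 - t)) < eps) ->
  (forall x, 1 - junction e < x < 1 -> is_derive z x (dz x) /\ is_derive dz x (- m * z x)) ->
  forall eps, 0 < eps -> exists d, 0 < d /\ forall t, 1 - d < t < 1 ->
    Rabs (picone (ground_state e) (ground_state' e) z dz t) <= eps.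
Proof.
  intros He Hz Hd eps Heps.
  pose proof (junction_bounds e He). pose proof (PI_lt_freq e He). pose proof PI_RGT_0.
  assert (Hrefl : forall x, 0 < x < junction e ->
    is_derive (fun t => z (1 - t)) x (- dz (1 - x)) /\
    is_derive (fun t => - dz (1 - t)) x (- m * z (1 - x))).
  { intros x Hx. destruct (Hd (1 - x) ltac:(lra)) as [D1 D2]. split.
    - apply is_derive_reflect; auto.
    - replace (- m * z (1 - x)) with (- - (- m * z (1 - x))) by ring.
      apply (is_derive_opp (fun t => dz (1 - t))), is_derive_reflect; auto. }
  destruct (sine_picone_vanishes_at_0 (fun t => z (1 - t)) (fun t => - dz (1 - t)) m
    (freq e) (junction e) ltac:(lra) ltac:(lra) Hz Hrefl eps Heps) as [d [Hd0 Hdd]].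
  exists (Rmin d (junction e)). split; [apply Rmin_pos; lra|]. intros t Ht.
  pose proof (Rmin_l d (junction e)). pose proof (Rmin_r d (junction e)).
  destruct (ground_state_right e He t ltac:(lra)) as [E1 E2].
  specialize (Hdd (1 - t) ltac:(lra)). replace (1 - (1 - t)) with t in Hdd by ring.
  unfold picone. rewrite E1, E2, <- Rabs_Ropp.
  replace (- _) with (z t * - dz t - z t ^ 2 *
    (freq e * cos (freq e * (1 - t)) / sin (freq e * (1 - t)))) by (unfold Rdiv; ring).
  exact Hdd.
Qed.

Lemma freq_sq_le_eigenvalue e m : 0 < e <= 1/2 ->
  is_eigenvalue (potential e) m -> freq e ^ 2 <= m.
Proof.
  intros He [z [dz [Hcont [Hd [z0 [z1 Hnz]]]]]]. pose proof (junction_bounds e He).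
  assert (Hfree : forall x, 0 < x < junction e \/ 1 - junction e < x < 1 ->
    is_derive z x (dz x) /\ is_derive dz x (- m * z x)).
  { intros x Hx. destruct (Hd x ltac:(lra)) as [D1 D2].
    rewrite potential_outside in D2 by lra. split; auto.
    replace (- m * z x) with (0 * z x - m * z x) by ring. auto. }
  apply (le_eigenvalue_of_picone (potential e) (ground_state e) (ground_state' e) z dz); auto.
  - apply ground_state_pos; auto.
  - intros t _. rewrite <- ground_state_ode by auto.
    split; [apply is_derive_ground_state | apply is_derive_ground_state']; auto.
  - apply (ground_state_picone_vanishes_at_0 e z dz m He).
    + apply small_near_0_of_continuous_within; auto. apply Hcont. lra.
    + intros x Hx. apply Hfree. lra.
  - apply (ground_state_picone_vanishes_at_1 e z dz m He).
    + apply small_near_1_of_continuous_within; auto. apply Hcont. lra.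
    + intros x Hx. apply Hfree. lra.
Qed.

Lemma potential_smallest_eigenvalue e : 0 < e <= 1/2 ->
  is_smallest_eigenvalue (potential e) (freq e ^ 2).
Proof.
  intros He. pose proof (junction_bounds e He).
  split; [|intros m; apply freq_sq_le_eigenvalue; auto].
  exists (ground_state e), (ground_state' e).
  split; [|split; [|split; [|split]]].
  - intros x _. apply (filterlim_filter_le_1 (F := locally x)); [apply filter_le_within|].
    apply (ex_derive_continuous (V := R_NormedModule) (ground_state e)).
    eexists. apply is_derive_ground_state; auto.
  - intros x _. rewrite <- ground_state_ode by auto.
    split; [apply is_derive_ground_state | apply is_derive_ground_state']; auto.
  - destruct (ground_state_left e 0 ltac:(lra)) as [E _]. rewrite E, Rmult_0_r, sin_0. auto.
  - destruct (ground_state_right e He 1 ltac:(lra)) as [E _].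
    rewrite E, Rminus_diag, Rmult_0_r, sin_0. auto.
  - exists (1/2). split; [lra|]. apply Rgt_not_eq, ground_state_pos; auto; lra.
Qed.

Lemma potential_in_A (r : R -> R) (g e M : R) : cont_open01 r -> 1 <= g ->
  (forall x, 1/4 <= x <= 3/4 -> 0 <= r x <= M) -> 1 <= M ->
  0 < e <= 1/2 -> 72 * M * e ^ 2 <= 1 -> in_A r g (potential e).
Proof.
  intros Hr Hg HrM HM He HeM. pose proof (junction_bounds e He).
  set (F := fun x => r x * rpow (potential e x) g).
  assert (Hsmall : forall x, potential e x <= 1 / (2 * M)).
  { intros x. pose proof (potential_le e He x).
    apply Rle_trans with (36 * e ^ 2); auto.
    apply Rmult_le_reg_r with (2 * M); [lra|]. field_simplify; lra. }
  assert (HF : forall x, junction e <= x <= 1 - junction e -> F x <= 1 / 2).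
  { intros x Hx. unfold F. pose proof (HrM x ltac:(lra)). pose proof (Hsmall x).
    pose proof (potential_nonneg e He x).
    assert (1 / (2 * M) <= 1) by (apply Rmult_le_reg_r with (2 * M); [lra|]; field_simplify; lra).
    pose proof (rpow_le_self (potential e x) g Hg ltac:(lra)).
    apply Rle_trans with (M * (1 / (2 * M))); [apply Rmult_le_compat; lra | right; field; lra]. }
  assert (Hleft : is_RInt F 0 (junction e) 0).
  { apply is_RInt_zero_inside; [lra|]. intros x Hx. unfold F.
    rewrite potential_outside, rpow_0 by lra. ring. }
  assert (Hright : is_RInt F (1 - junction e) 1 0).
  { apply is_RInt_zero_inside; [lra|]. intros x Hx. unfold F.
    rewrite potential_outside, rpow_0 by lra. ring. }
  assert (Hmid : ex_RInt F (junction e) (1 - junction e)).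
  { apply (ex_RInt_continuous (V := R_CompleteNormedModule) F). intros x Hx.
    rewrite Rmin_left, Rmax_right in Hx by lra.
    apply (continuous_mult r (fun u => rpow (potential e u) g)); [apply Hr; lra|].
    apply continuous_rpow_comp; auto using potential_nonneg, continuous_potential. }
  set (I := RInt F (junction e) (1 - junction e)).
  assert (HI : I <= 1).
  { assert (Hconst : I <= scal (1 - junction e - junction e) (1 / 2)).
    { apply (is_RInt_le F (fun _ => 1 / 2) (junction e) (1 - junction e)); try lra.
      - exact (RInt_correct _ _ _ Hmid).
      - exact (is_RInt_const (V := R_NormedModule) _ _ _).
      - intros x Hx. apply HF. lra. }
    unfold scal in Hconst; simpl in Hconst; unfold mult in Hconst; simpl in Hconst. nra. }
  assert (Hall : is_RInt F 0 1 (0 + (I + 0))).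
  { apply (is_RInt_Chasles F 0 (junction e) 1 0 (I + 0)); auto.
    apply (is_RInt_Chasles F (junction e) (1 - junction e) 1 I 0); auto.
    exact (RInt_correct _ _ _ Hmid). }
  rewrite Rplus_0_l, Rplus_0_r in Hall.
  split; [intros x _; apply potential_nonneg; auto|].
  split; [exists I; auto|]. change (RInt F 0 1 <= 1). rewrite (is_RInt_unique F 0 1 I); auto.
Qed.

Lemma small_parameter_exists M : 1 <= M -> exists e, 0 < e <= 1/2 /\ 72 * M * e ^ 2 <= 1.
Proof.
  intros HM. exists (1 / (72 * M)).
  assert (Hle : 1 / (72 * M) <= 1 / 72).
  { apply Rmult_le_reg_r with (72 * M); [lra|]. field_simplify; lra. }
  split; [split; [apply Rdiv_lt_0_compat|]; lra|].
  replace (72 * M * (1 / (72 * M)) ^ 2) with (1 / (72 * M)) by (field; lra). lra.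
Qed.

Theorem mainTheorem14 (r : R -> R) (g : R) :
  cont_open01 r ->
  (forall a b, 0 < a -> a <= b -> b < 1 ->
     exists m, 0 < m /\ forall x, a <= x <= b -> m <= r x) ->
  1 < g ->
  exists d, 0 < d /\ exists q : R -> R, in_B r g d q.
Proof.
  intros Hr Hlow Hg.
  destruct (continuity_ab_maj r (1/4) (3/4)) as [xmax [Hxmax _]]; [lra| |].
  { intros x Hx. apply continuity_pt_filterlim, Hr. lra. }
  destruct (Hlow (1/4) (3/4)) as [mlow [Hmlow Hrlow]]; try lra.
  set (M := Rmax 1 (r xmax)).
  assert (HM1 : 1 <= M) by apply Rmax_l. assert (HMr : r xmax <= M) by apply Rmax_r.
  destruct (small_parameter_exists M HM1) as [e [He Hsmall]].
  pose proof (PI_lt_freq e He). pose proof PI_RGT_0. pose proof (junction_bounds e He).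
  exists (freq e ^ 2 - PI ^ 2). split; [nra|].
  exists (potential e). split; [|split; [|split]].
  - apply (potential_in_A r g e M); auto; try lra.
    intros x Hx. pose proof (Hrlow x Hx). pose proof (Hxmax x Hx). lra.
  - intros x _. apply continuous_potential; auto.
  - exists (junction e), (1 - junction e). repeat split; try lra.
    intros x Hx. apply potential_outside; auto. lra.
  - exists (freq e ^ 2). split; [apply potential_smallest_eigenvalue; auto | lra].
Qed.
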